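(* If $X$ satisfies ${\sf S}_1(\mathcal{G}_K,\mathcal{G}_{D_\Gamma})$, then $X$ is productively weakly Menger: for every weakly Menger space $Y$, $X\times Y$ is weakly Menger.
   Context: All spaces are infinite ${\sf T}_1$ topological spaces. $\mathcal{G}_K$ is the family of all collections $\mathcal{U}$ of ${\sf G}_\delta$ subsets of $X$ with $X\notin\mathcal{U}$ such that each compact subset of $X$ is contained in some member of $\mathcal{U}$. $\mathcal{G}_{D_\Gamma}$ is the family of infinite collections $\mathcal{U}$ of ${\sf G}_\delta$ subsets of $X$ such that for each nonempty open $U\subseteq X$, $\{V\in\mathcal{U}:U\cap V=\emptyset\}$ is finite. ${\sf S}_1(\mathcal{A},\mathcal{B})$: for each sequence $(A_n)$ of elements of $\mathcal{A}$ there are $B_n\in A_n$ with $\{B_n:n\in\mathbb{N}\}\in\mathcal{B}$. A space is weakly Menger if for each sequence $(\mathcal{U}_n)$ of open covers there are finite $\mathcal{V}_n\subseteq\mathcal{U}_n$ such that $\bigcup_n\bigcup\mathcal{V}_n$ is dense. *)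

From Stdlib Require Import List.

Definition set (T : Type) := T -> Prop.

Definition subset {T} (A B : set T) : Prop := forall x, A x -> B x.

(* axioms of a topology (empty set is the union of the empty family) *)
Definition is_topology {T} (op : set T -> Prop) : Prop :=
  op (fun _ => True) /\
  (forall U V, op U -> op V -> op (fun x => U x /\ V x)) /\
  (forall F : set (set T), (forall U, F U -> op U) ->
     op (fun x => exists U, F U /\ U x)).

Definition T1_space {T} (op : set T -> Prop) : Prop :=
  forall x y : T, x <> y -> exists U, op U /\ U x /\ ~ U y.

Definition infinite_type (T : Type) : Prop :=
  ~ exists l : list T, forall x, In x l.

Definition compact {T} (op : set T -> Prop) (K : set T) : Prop :=
  forall F : set (set T), (forall U, F U -> op U) ->
    (forall x, K x -> exists U, F U /\ U x) ->
    exists l : list (set T), (forall U, In U l -> F U) /\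
      (forall x, K x -> exists U, In U l /\ U x).

Definition Gdelta {T} (op : set T -> Prop) (A : set T) : Prop :=
  exists W : nat -> set T, (forall n, op (W n)) /\
    (forall x, A x <-> forall n, W n x).

Definition dense {T} (op : set T -> Prop) (D : set T) : Prop :=
  forall U, op U -> (exists x, U x) -> exists x, U x /\ D x.

Definition open_cover {T} (op : set T -> Prop) (F : set (set T)) : Prop :=
  (forall U, F U -> op U) /\ (forall x, exists U, F U /\ U x).

(* finiteness of a collection of sets (up to extensional equality of sets) *)
Definition finite_col {T} (C : set (set T)) : Prop :=
  exists l : list (set T), forall V, C V ->
    exists W, In W l /\ (forall x, V x <-> W x).

Definition weakly_Menger {T} (op : set T -> Prop) : Prop :=
  forall Us : nat -> set (set T), (forall n, open_cover op (Us n)) ->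
    exists Vs : nat -> list (set T),
      (forall n U, In U (Vs n) -> Us n U) /\
      dense op (fun x => exists n U, In U (Vs n) /\ U x).

Definition G_K {T} (op : set T -> Prop) : set (set (set T)) :=
  fun C => (forall V, C V -> Gdelta op V) /\
           ~ (exists V, C V /\ forall x, V x) /\
           (forall K, compact op K -> exists V, C V /\ subset K V).

Definition G_DGamma {T} (op : set T -> Prop) : set (set (set T)) :=
  fun C => ~ finite_col C /\ (forall V, C V -> Gdelta op V) /\
           (forall U, op U -> (exists x, U x) ->
              finite_col (fun V => C V /\ ~ exists x, U x /\ V x)).

Definition S1 {T} (A B : set (set (set T))) : Prop :=
  forall As : nat -> set (set T), (forall n, A (As n)) ->
    exists Bs : nat -> set T, (forall n, As n (Bs n)) /\
      B (fun V => exists n, V = Bs n).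

Definition prod_open {X Y} (opX : set X -> Prop) (opY : set Y -> Prop)
  (W : set (X * Y)) : Prop :=
  forall p, W p -> exists U V, opX U /\ opY V /\ U (fst p) /\ V (snd p) /\
    (forall q, U (fst q) -> V (snd q) -> W q).

(* Fix a sequence (W_n) of open covers of X × Y.  For a shift k,
   call a set B ⊆ X "section dense at k" if there are finite F_j ⊆ W_(j+k)
   such that for every x ∈ B the vertical section
   { y | (x,y) ∈ ⋃_j ⋃ F_j } is dense in Y.
   1. Tube-type lemmas: a compact K ⊆ X and a point y have open neighbourhoods
      Z ⊇ K, O ∋ y with Z × O covered by finitely many members of a cover.
   2. Applying weak Mengerness of Y to the covers of Y by such O's, every
      compact K is contained in a G_delta set that is section dense at k.
   3. If one such set is all of X we are done; otherwise, for each k, the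
      G_delta sets section dense at k form a member of G_K, and
      S_1(G_K, G_DGamma) selects B_k from them with {B_k} in G_DGamma.
   4. A G_DGamma collection meets every nonempty open set, and section-dense
      sets B_k meeting every nonempty open set assemble, along the diagonals
      n = j + k, into a witness of weak Mengerness of X × Y. *)
From Stdlib Require Import List Lia Classical IndefiniteDescription.

Lemma common_open_nbhd {T A : Type} (op : set T -> Prop) (hop : is_topology op)
  (K : set T) (P : A -> set T -> Prop)
  (P_shrink : forall a O O', subset O' O -> P a O -> P a O') (l : list A) :
  (forall a, In a l -> exists O, op O /\ subset K O /\ P a O) ->
  exists O, op O /\ subset K O /\ forall a, In a l -> P a O.
Proof.
  destruct hop as [op_full [op_inter _]].
  induction l as [|a l IH]; intros hl.
  - exists (fun _ => True). split; [exact op_full|].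
    split; [intros ? _; exact I | intros ? []].
  - destruct (hl a (or_introl eq_refl)) as [O1 [hO1 [hKO1 hPO1]]].
    destruct IH as [O2 [hO2 [hKO2 hPO2]]]; [intros b hb; apply hl; now right|].
    exists (fun x => O1 x /\ O2 x). repeat split; auto.
    intros b [<-|hb]; eapply P_shrink; [| exact hPO1 | | exact (hPO2 b hb)];
      intros x []; assumption.
Qed.

Section FiniteCovers.
Context {X Y : Type} (W : set (set (X * Y))).

Definition fin_covered (Z : set X) (O : set Y) : Prop :=
  exists F : list (set (X * Y)), (forall G, In G F -> W G) /\
    forall x y, Z x -> O y -> exists G, In G F /\ G (x, y).

Lemma fin_covered_shrink (Z Z' : set X) (O O' : set Y) :
  subset Z' Z -> subset O' O -> fin_covered Z O -> fin_covered Z' O'.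
Proof.
  intros hZ hO [F [hF hcov]]. exists F. split; [exact hF|].
  intros x y hx hy. exact (hcov x y (hZ x hx) (hO y hy)).
Qed.

Lemma fin_covered_list {A : Type} (Z : A -> set X) (O : A -> set Y) (l : list A) :
  (forall a, In a l -> fin_covered (Z a) (O a)) ->
  exists F : list (set (X * Y)), (forall G, In G F -> W G) /\
    forall a, In a l -> forall x y, Z a x -> O a y -> exists G, In G F /\ G (x, y).
Proof.
  induction l as [|a l IH]; intros hl.
  - exists nil. split; intros ? [].
  - destruct (hl a (or_introl eq_refl)) as [F1 [hF1 hcov1]].
    destruct IH as [F2 [hF2 hcov2]]; [intros b hb; apply hl; now right|].
    exists (F1 ++ F2). split.
    + intros G hG. apply in_app_or in hG as [hG|hG]; auto.
    + intros b [<-|hb] x y hx hy.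
      * destruct (hcov1 x y hx hy) as [G [hG hGxy]].
        exists G. split; [apply in_or_app; now left | exact hGxy].
      * destruct (hcov2 b hb x y hx hy) as [G [hG hGxy]].
        exists G. split; [apply in_or_app; now right | exact hGxy].
Qed.

Lemma fin_covered_union_left (l : list (set X)) (O : set Y) :
  (forall U, In U l -> fin_covered U O) ->
  fin_covered (fun x => exists U, In U l /\ U x) O.
Proof.
  intros hl. destruct (fin_covered_list (fun U => U) (fun _ => O) l hl) as [F [hF hcov]].
  exists F. split; [exact hF|]. intros x y [U [hU hx]] hy. exact (hcov U hU x y hx hy).
Qed.

Lemma fin_covered_union_right (Z : set X) (l : list (set Y)) :
  (forall O, In O l -> fin_covered Z O) ->
  fin_covered Z (fun y => exists O, In O l /\ O y).
Proof.
  intros hl. destruct (fin_covered_list (fun _ => Z) (fun O => O) l hl) as [F [hF hcov]].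
  exists F. split; [exact hF|]. intros x y hx [O [hO hy]]. exact (hcov O hO x y hx hy).
Qed.

End FiniteCovers.

Section Product.
Context {X Y : Type} (opX : set X -> Prop) (opY : set Y -> Prop).
Hypotheses (hX : is_topology opX) (hY : is_topology opY).

Lemma tube (W : set (set (X * Y))) (hW : open_cover (prod_open opX opY) W)
  (K : set X) (hK : compact opX K) (y : Y) :
  exists O, opY O /\ O y /\
    exists Z, opX Z /\ subset K Z /\ fin_covered W Z O.
Proof.
  destruct (hK (fun U => opX U /\ exists V, opY V /\ V y /\ fin_covered W U V))
    as [l [hl hKl]].
  - intros U [hU _]; exact hU.
  - intros x _. destruct hW as [W_open W_cover].
    destruct (W_cover (x, y)) as [G [hG hGxy]].
    destruct (W_open G hG (x, y) hGxy) as [U [V [hU [hV [hUx [hVy hUV]]]]]].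
    exists U. repeat split; auto. exists V. repeat split; auto.
    exists (G :: nil). split; [intros G' [<-|[]]; exact hG|].
    intros a b ha hb. exists G. split; [now left | exact (hUV (a, b) ha hb)].
  - destruct (common_open_nbhd opY hY (fun b => b = y) (fun U O => fin_covered W U O)
      (fun U O O' hO' => fin_covered_shrink W U U O O' (fun _ h => h) hO') l)
      as [O [hO [hOy hcov]]].
    { intros U hU. destruct (hl U hU) as [_ [V [hV [hVy hUV]]]].
      exists V. repeat split; auto. intros b ->. exact hVy. }
    exists O. repeat split; [exact hO | exact (hOy y eq_refl)|].
    exists (fun x => exists U, In U l /\ U x). repeat split.
    + destruct hX as [_ [_ op_union]]. apply op_union.
      intros U hU. exact (proj1 (hl U hU)).
    + intros x hx. exact (hKl x hx).
    + exact (fin_covered_union_left W l O hcov).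
Qed.

Variables (Ws : nat -> set (set (X * Y))).
Hypothesis hWs : forall n, open_cover (prod_open opX opY) (Ws n).

Definition section_dense (k : nat) (B : set X) : Prop :=
  exists Fs : nat -> list (set (X * Y)),
    (forall j G, In G (Fs j) -> Ws (j + k) G) /\
    forall x, B x -> dense opY (fun y => exists j G, In G (Fs j) /\ G (x, y)).

Lemma compact_in_section_dense (hWM : weakly_Menger opY) (k : nat)
  (K : set X) (hK : compact opX K) :
  exists B, Gdelta opX B /\ section_dense k B /\ subset K B.
Proof.
  set (C := fun j (O : set Y) => opY O /\
              exists Z, opX Z /\ subset K Z /\ fin_covered (Ws (j + k)) Z O).
  assert (hC : forall j, open_cover opY (C j)).
  { intros j. split; [intros O [hO _]; exact hO|].
    intros y. destruct (tube (Ws (j + k)) (hWs (j + k)) K hK y) as [O [hO [hOy hZ]]].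
    exists O. repeat split; auto. }
  destruct (hWM C hC) as [Vs [hVs hdense]].
  assert (hZ : forall j, exists Z, opX Z /\ subset K Z /\
            fin_covered (Ws (j + k)) Z (fun y => exists O, In O (Vs j) /\ O y)).
  { intros j.
    destruct (common_open_nbhd opX hX K (fun O Z => fin_covered (Ws (j + k)) Z O)
      (fun O Z Z' hZ' => fin_covered_shrink _ Z Z' O O hZ' (fun _ h => h)) (Vs j))
      as [Z [hZ [hKZ hcov]]].
    { intros O hO. exact (proj2 (hVs j O hO)). }
    exists Z. repeat split; auto. exact (fin_covered_union_right _ Z (Vs j) hcov). }
  destruct (functional_choice _ hZ) as [Z hZj].
  destruct (functional_choice (fun j F => (forall G, In G F -> Ws (j + k) G) /\
     forall x y, Z j x -> (exists O, In O (Vs j) /\ O y) -> exists G, In G F /\ G (x, y)))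
    as [Fs hFs]; [intros j; exact (proj2 (proj2 (hZj j)))|].
  exists (fun x => forall j, Z j x). repeat split.
  - exists Z. split; [intros j; exact (proj1 (hZj j)) | tauto].
  - exists Fs. split; [intros j; exact (proj1 (hFs j))|].
    intros x hx U hU hUne.
    destruct (hdense U hU hUne) as [y [hUy [j [O [hO hOy]]]]].
    destruct (proj2 (hFs j) x y (hx j) (ex_intro _ O (conj hO hOy))) as [G [hG hGxy]].
    exists y. split; [exact hUy|]. exists j, G. auto.
  - intros x hx j. exact (proj1 (proj2 (hZj j)) x hx).
Qed.

(* Section-dense sets B_k (one per shift) meeting every nonempty open set of X
   yield finite selections V_n ⊆ W_n with dense union in X × Y: put into V_n
   the selections F_j of B_k for all j + k = n. *)
Lemma weakly_Menger_from_sections (Bs : nat -> set X)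
  (hB : forall k, section_dense k (Bs k))
  (hmeet : forall U, opX U -> (exists x, U x) -> exists k x, U x /\ Bs k x) :
  exists Vs : nat -> list (set (X * Y)),
    (forall n U, In U (Vs n) -> Ws n U) /\
    dense (prod_open opX opY) (fun p => exists n U, In U (Vs n) /\ U p).
Proof.
  destruct (functional_choice _ hB) as [g hg].
  exists (fun n => flat_map (fun k => g k (n - k)) (seq 0 (S n))). split.
  - intros n G hG. apply in_flat_map in hG as [k [hk hG]].
    apply in_seq in hk. apply (proj1 (hg k)) in hG.
    replace (n - k + k) with n in hG by lia. exact hG.
  - intros W hW [p hp].
    destruct (hW p hp) as [U [V [hU [hV [hUp [hVp hUV]]]]]].
    destruct (hmeet U hU (ex_intro _ _ hUp)) as [k [x [hUx hBx]]].
    destruct (proj2 (hg k) x hBx V hV (ex_intro _ _ hVp))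
      as [y [hVy [j [G [hG hGxy]]]]].
    exists (x, y). split; [exact (hUV (x, y) hUx hVy)|].
    exists (j + k), G. split; [|exact hGxy].
    apply in_flat_map. exists k. split; [apply in_seq; lia|].
    replace (j + k - k) with j by lia. exact hG.
Qed.

End Product.

(* A member of G_DGamma meets every nonempty open set: otherwise all of its
   members would be disjoint from that set, making it finite. *)
Lemma G_DGamma_meets {T : Type} (op : set T -> Prop) (C : set (set T)) :
  G_DGamma op C ->
  forall U, op U -> (exists x, U x) -> exists V x, C V /\ U x /\ V x.
Proof.
  intros [C_infinite [_ C_disjoint_finite]] U hU hUne.
  apply NNPP. intros hmiss. apply C_infinite.
  destruct (C_disjoint_finite U hU hUne) as [l hl]. exists l.
  intros V hV. apply hl. split; [exact hV|].
  intros [x [hUx hVx]]. apply hmiss. now exists V, x.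
Qed.

Theorem theorem5p15 (X : Type) (opX : set X -> Prop)
  (hX : is_topology opX) (hXT1 : T1_space opX) (hXinf : infinite_type X)
  (hS : S1 (G_K opX) (G_DGamma opX)) :
  forall (Y : Type) (opY : set Y -> Prop),
    is_topology opY -> T1_space opY -> infinite_type Y ->
    weakly_Menger opY -> weakly_Menger (prod_open opX opY).
Proof.
  intros Y opY hY _ _ hWM Ws hWs.
  destruct (classic (exists k B, section_dense opY Ws k B /\ forall x, B x))
    as [[k [B [[Fs [hFs hdense]] hfull]]] | hno].
  - (* X itself is section dense at k: use it at shift k and nothing elsewhere *)
    apply (weakly_Menger_from_sections opX opY Ws (fun k' _ => k' = k)).
    + intros k'. destruct (classic (k' = k)) as [->|hne].
      * exists Fs. split; [exact hFs | intros x _; exact (hdense x (hfull x))].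
      * exists (fun _ => nil). split; [intros ? ? [] | intros x hx; contradiction].
    + intros U _ [x hx]. now exists k, x.
  - (* the G_delta section-dense sets at each shift form a member of G_K *)
    destruct (hS (fun k B => Gdelta opX B /\ section_dense opY Ws k B))
      as [Bs [hBs hDGamma]].
    + intros k. repeat split.
      * intros V [hV _]; exact hV.
      * intros [V [[_ hV] hfull]]. apply hno. now exists k, V.
      * intros K hK.
        destruct (compact_in_section_dense opX opY hX hY Ws hWs hWM k K hK)
          as [B [hB [hsd hKB]]].
        now exists B.
    + apply (weakly_Menger_from_sections opX opY Ws Bs).
      * intros k. exact (proj2 (hBs k)).
      * intros U hU hUne.
        destruct (G_DGamma_meets opX _ hDGamma U hU hUne) as [V [x [[k ->] [hUx hVx]]]].
        now exists k, x.
Qed.
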